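(* Let $(R,\mathfrak{m})$ be a commutative Artinian local ring with identity, $\mathfrak{m}\neq0$ and $\mathfrak{m}^2=0$. If $|R|>4$ (including the case $R$ infinite), then $L(x^6)=\{2,3,4,6\}$; if $|R|=4$, then $L(x^6)=\{2,4,6\}$.
   Context: A nonunit polynomial in $R[x]$ is irreducible if in any factorization into two polynomials one factor is a unit of $R[x]$. A positive integer $k$ is a length of $f$ if $f$ is a product of $k$ irreducible polynomials of $R[x]$; $L(f)$ denotes the set of lengths of $f$. *)

From HB Require Import structures.
From mathcomp Require Import all_boot all_order all_algebra.
Set Implicit Arguments. Unset Strict Implicit. Unset Printing Implicit Defensive.
Import GRing.Theory.
Local Open Scope ring_scope.

Definition is_ideal (R : comNzRingType) (I : R -> Prop) : Prop :=
  I 0 /\ (forall a b, I a -> I b -> I (a - b)) /\ (forall r a, I a -> I (r * a)).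

Definition artinian (R : comNzRingType) : Prop :=
  forall I : nat -> R -> Prop,
    (forall n, is_ideal (I n)) ->
    (forall n x, I n.+1 x -> I n x) ->
    exists N, forall n, (N <= n)%N -> forall x, I n x <-> I N x.

(* Local ring: the non-units form an ideal (the unique maximal ideal m). *)
Definition local_ring (R : comUnitRingType) : Prop :=
  is_ideal (fun x : R => x \isn't a GRing.unit).

Definition punit (R : comNzRingType) (f : {poly R}) : Prop :=
  exists g : {poly R}, f * g = 1.

Definition pirreducible (R : comNzRingType) (f : {poly R}) : Prop :=
  ~ punit f /\ forall g h : {poly R}, f = g * h -> punit g \/ punit h.

Definition is_length (R : comNzRingType) (f : {poly R}) (k : nat) : Prop :=
  (0 < k)%N /\
  exists s : seq {poly R},
    size s = k /\ (forall g, g \in s -> pirreducible g) /\ \prod_(g <- s) g = f.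

Definition card_eq (T : eqType) (n : nat) : Prop :=
  exists s : seq T, uniq s /\ size s = n /\ forall x, x \in s.
Definition card_gt (T : eqType) (n : nat) : Prop :=
  exists s : seq T, uniq s /\ (n < size s)%N.

From HB Require Import structures.
From mathcomp Require Import all_boot all_order all_algebra.
From mathcomp Require Import ring.
From Stdlib Require Import Classical.
Set Implicit Arguments. Unset Strict Implicit. Unset Printing Implicit Defensive.
Import GRing.Theory.
Local Open Scope ring_scope.

(* Let m be the maximal ideal, i.e. the set of nonunits. Say that f has type e
   when f = u X^e mod m with u a unit: types add under multiplication, and since
   m^2 = 0 a polynomial of type 0 is a unit of R[x].  A polynomial of type e > 0
   is irreducible as soon as e = 1 or f(0) <> 0, and conversely an irreducible
   factor of X^n of type e >= 2 has f(0) <> 0, as otherwise X splits off.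
   Write each factor as c (X^e + t) with t in m[x]; products of two tails vanish,
   so in a factorization of X^n the coefficient of X^(n - E), E >= 2 the largest
   type, says that the nonzero values t(0) of the factors of type E sum to 0.
   Hence E cannot occur exactly once, nor exactly three times when |R| = 4, because then
   m = {0, a}.  Checking the compositions of 6 leaves the lengths 2, 3, 4, 6
   (resp. 2, 4, 6), and all occur: (X^3 + a)(X^3 - a), X X (X^2 + a)(X^2 - a),
   (X^2 + a)(X^2 + b)(X^2 - a - b) with b in m \ {0, -a} (available when
   |R| > 4), and X ... X. *)

Section Compositions.
Local Open Scope nat_scope.

(* [fuel] bounds the number of parts; [compositions n] below has enough of it. *)
Fixpoint compositions_rec (fuel n : nat) : seq (seq nat) :=
  if n is 0 then [:: [::]] else
  if fuel is fuel'.+1 then [seq e :: t | e <- iota 1 n, t <- compositions_rec fuel' (n - e)]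
  else [::].

Definition compositions (n : nat) := compositions_rec n n.

Lemma size_le_sumn (es : seq nat) : all (fun e => 0 < e) es -> size es <= sumn es.
Proof. by elim: es => //= e es IHes /andP [e_gt0 /IHes]; rewrite -add1n; apply: leq_add. Qed.

Lemma mem_compositions_rec fuel (es : seq nat) : all (fun e => 0 < e) es ->
  size es <= fuel -> es \in compositions_rec fuel (sumn es).
Proof.
elim: es fuel => [|e es IHes] [|fuel] //=; rewrite ?inE // => /andP [e_gt0 pos] size_le.
have [n sum_n] : exists n, e + sumn es = n.+1 by exists (e + sumn es).-1; rewrite prednK ?ltn_addr.
rewrite sum_n; apply/allpairsPdep; exists e, es; split=> //.
  by rewrite mem_iota e_gt0 add1n -sum_n ltnS leq_addr.
by rewrite -sum_n addKn; apply: IHes.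
Qed.

Lemma mem_compositions (es : seq nat) :
  all (fun e => 0 < e) es -> es \in compositions (sumn es).
Proof. by move=> pos; apply: mem_compositions_rec => //; apply: size_le_sumn. Qed.

Lemma compositions_all (P : pred (seq nat)) n : all P (compositions n) ->
  forall es, all (fun e => 0 < e) es -> sumn es = n -> P es.
Proof. by move=> /allP allP_n es pos sum_n; apply/allP_n; rewrite -sum_n mem_compositions. Qed.

Definition top_mult_avoids (bad es : seq nat) :=
  all (fun E => (1 < E) ==> all (fun e => e <= E) es ==> (count_mem E es \notin bad)) es.

Lemma top_mult_avoidsP (P : nat -> Prop) (bad es : seq nat) :
  (forall E, E \in es -> 1 < E -> all (fun e => e <= E) es -> P (count_mem E es)) ->
  (forall k, k \in bad -> ~ P k) -> top_mult_avoids bad es.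
Proof.
move=> top_P badN; apply/allP => E Ees; apply/implyP => E_gt1; apply/implyP => maxE.
by apply/negP => /badN; apply; apply: top_P.
Qed.

Lemma composition6_size es : all (fun e => 0 < e) es -> sumn es = 6 ->
  top_mult_avoids [:: 1] es -> size es \in [:: 2; 3; 4; 6].
Proof.
move=> pos sum6; apply/implyP; move: es pos sum6.
by apply: (@compositions_all (fun es => top_mult_avoids _ es ==> (size es \in _))); vm_compute.
Qed.

Lemma composition6_size_no3 es : all (fun e => 0 < e) es -> sumn es = 6 ->
  top_mult_avoids [:: 1; 3] es -> size es \in [:: 2; 4; 6].
Proof.
move=> pos sum6; apply/implyP; move: es pos sum6.
by apply: (@compositions_all (fun es => top_mult_avoids _ es ==> (size es \in _))); vm_compute.
Qed.

End Compositions.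

Lemma is_length_mul (R : comNzRingType) (f g : {poly R}) m n :
  is_length f m -> is_length g n -> is_length (f * g) (m + n)%N.
Proof.
move=> [m_gt0 [s [size_s [irr_s <-]]]] [_ [t [size_t [irr_t <-]]]].
split; first by rewrite addn_gt0 m_gt0.
exists (s ++ t); rewrite size_cat size_s size_t big_cat; split=> //; split=> // h.
by rewrite mem_cat => /orP []; [apply: irr_s | apply: irr_t].
Qed.

Section LocalRing.

Variable R : comUnitRingType.
Hypothesis Rlocal : local_ring R.

Lemma nonunit0 : (0 : R) \isn't a GRing.unit.
Proof. by rewrite unitr0. Qed.

Lemma nonunitB (a b : R) :
  a \isn't a GRing.unit -> b \isn't a GRing.unit -> a - b \isn't a GRing.unit.
Proof. by have [_ [subI _]] := Rlocal; apply: subI. Qed.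

Lemma nonunitMl (r a : R) : a \isn't a GRing.unit -> r * a \isn't a GRing.unit.
Proof. by have [_ [_ mulI]] := Rlocal; apply: mulI. Qed.

Lemma nonunitMr (r a : R) : a \isn't a GRing.unit -> a * r \isn't a GRing.unit.
Proof. by rewrite mulrC; apply: nonunitMl. Qed.

Lemma nonunitN (a : R) : a \isn't a GRing.unit -> - a \isn't a GRing.unit.
Proof. by rewrite -sub0r; apply/nonunitB/nonunit0. Qed.

Lemma nonunitD (a b : R) :
  a \isn't a GRing.unit -> b \isn't a GRing.unit -> a + b \isn't a GRing.unit.
Proof. by move=> na nb; rewrite -[b]opprK; apply/nonunitB/nonunitN. Qed.

Lemma nonunit_sum (I : Type) (r : seq I) (P : pred I) (F : I -> R) :
  (forall i, P i -> F i \isn't a GRing.unit) ->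
  \sum_(i <- r | P i) F i \isn't a GRing.unit.
Proof.
by move=> nF; apply: (big_ind (fun x => x \isn't a GRing.unit));
  [apply: nonunit0 | apply: nonunitD |].
Qed.

Lemma unitDnonunit (u a : R) :
  u \is a GRing.unit -> a \isn't a GRing.unit -> u + a \is a GRing.unit.
Proof.
move=> uu na; apply: contraLR uu => nua.
by rewrite -(addrK a u); apply: nonunitB.
Qed.

(* [has_type e f]: modulo the maximal ideal, [f] is a unit times ['X^e]. *)
Definition has_type (e : nat) (f : {poly R}) :=
  f`_e \is a GRing.unit /\ forall i, i != e -> f`_i \isn't a GRing.unit.

Definition ptype (f : {poly R}) : nat := find (fun c => c \is a GRing.unit) f.

Lemma has_type_uniq e e' f : has_type e f -> has_type e' f -> e = e'.
Proof.
by move=> [ue _] [_ ne']; apply/eqP; apply: contraLR ue => /ne'.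
Qed.

Lemma unit_coef_lt_size (f : {poly R}) i : f`_i \is a GRing.unit -> (i < size f)%N.
Proof. by apply: contraLR; rewrite -leqNgt => /(nth_default 0) ->; rewrite unitr0. Qed.

Lemma has_type_ptype e f : has_type e f -> ptype f = e.
Proof.
move=> [ue ne]; have hasf : has (fun c => c \is a GRing.unit) f.
  by apply/(has_nthP 0); exists e => //; apply: unit_coef_lt_size.
case: (ltngtP (ptype f) e) => // [lt_e | gt_e].
  by have := nth_find 0 hasf; rewrite (negPf (ne _ (negbT (ltn_eqF lt_e)))).
by have := before_find 0 gt_e; rewrite ue.
Qed.

Lemma has_typeXn n : has_type n ('X^n : {poly R}).
Proof.
split=> [|i ni]; first by rewrite coefXn eqxx unitr1.
by rewrite coefXn (negPf ni) unitr0.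
Qed.

Lemma has_typeXnC n (a : R) :
  (0 < n)%N -> a \isn't a GRing.unit -> has_type n ('X^n + a%:P).
Proof.
move=> n_gt0 na; split=> [|i ni]; rewrite coefD coefXn coefC.
  by rewrite eqxx eqn0Ngt n_gt0 addr0 unitr1.
by rewrite (negPf ni) add0r; case: eqP => _ //; apply: nonunit0.
Qed.

Lemma coefM_unit (f g : {poly R}) a b :
  f`_a \is a GRing.unit -> g`_b \is a GRing.unit ->
  (forall i j, (i + j = a + b)%N -> i != a ->
     f`_i \isn't a GRing.unit \/ g`_j \isn't a GRing.unit) ->
  (f * g)`_(a + b) \is a GRing.unit.
Proof.
move=> ua ub others.
rewrite coefM (bigD1 (Ordinal (leq_addr b a : (a < (a + b).+1)%N))) //=.
rewrite addKn; apply: unitDnonunit; first by rewrite unitrM ua ub.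
apply: nonunit_sum => i ia; have le_i : (i <= a + b)%N by rewrite -ltnS.
have [|nf|ng] := others i _ (subnKC le_i); last exact: nonunitMl.
  by apply: contraNneq ia => ia; apply/eqP/val_inj.
exact: nonunitMr.
Qed.

Lemma coefM_nonunit (f g : {poly R}) k :
  (forall i, f`_i \isn't a GRing.unit) \/ (forall j, g`_j \isn't a GRing.unit) ->
  (f * g)`_k \isn't a GRing.unit.
Proof.
by move=> nfg; rewrite coefM; apply: nonunit_sum => i _; case: nfg => n_;
  [apply: nonunitMr | apply: nonunitMl].
Qed.

Lemma unit_coefP (f : {poly R}) :
  (exists i, f`_i \is a GRing.unit) \/ (forall i, f`_i \isn't a GRing.unit).
Proof.
have [/(has_nthP 0) [i _ ui] | /hasPn nf] := boolP (has (fun c => c \is a GRing.unit) f).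
  by left; exists i.
right=> i; case: (ltnP i (size f)) => [/(mem_nth 0) /nf // | /(nth_default 0) ->].
exact: nonunit0.
Qed.

Lemma has_typeM n (f g : {poly R}) : has_type n (f * g) ->
  exists a b, [/\ has_type a f, has_type b g & (a + b = n)%N].
Proof.
move=> [un nn].
have [exf | nf] := unit_coefP f; last by case/negP: (@coefM_nonunit f g n (or_introl nf)).
have [exg | ng] := unit_coefP g; last by case/negP: (@coefM_nonunit f g n (or_intror ng)).
have bound (h : {poly R}) i : h`_i \is a GRing.unit -> (i <= size h)%N.
  by move/unit_coef_lt_size/ltnW.
have [a ua mina] := ex_minnP exf; have [a' ua' maxa'] := ex_maxnP exf (bound f).
have [b ub minb] := ex_minnP exg; have [b' ub' maxb'] := ex_maxnP exg (bound g).
have typed_at k : (f * g)`_k \is a GRing.unit -> k = n.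
  by move=> uk; apply/eqP; apply: contraLR uk => /nn ->.
have ab : (a + b = n)%N.
  apply/typed_at/coefM_unit => // i j ij ia; case: (ltngtP i a) ia => // [lt_ia | lt_ai] _.
    by left; apply: contraL lt_ia => /mina; rewrite leqNgt.
  by right; apply: contraL lt_ai => /minb; rewrite -(leq_add2l i) ij leq_add2r leqNgt.
have ab' : (a' + b' = n)%N.
  apply/typed_at/coefM_unit => // i j ij ia; case: (ltngtP i a') ia => // [lt_ia | lt_ai] _.
    by right; apply: contraL lt_ia => /maxb'; rewrite -(leq_add2l i) ij leq_add2r leqNgt.
  by left; apply: contraL lt_ai => /maxa'; rewrite leqNgt.
have aa' : a' = a.
  by apply/eqP; rewrite eqn_leq mina // andbT -(leq_add2r b') ab' -ab leq_add2l minb.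
have bb' : b' = b.
  by apply/eqP; rewrite eqn_leq minb // andbT -(leq_add2l a) ab -ab' aa'.
exists a, b; split=> //; split=> // i; case: ltngtP => // [lt_i | gt_i] _.
- by apply: contraL lt_i => /mina; rewrite leqNgt.
- by apply: contraL gt_i => /maxa'; rewrite aa' leqNgt.
- by apply: contraL lt_i => /minb; rewrite leqNgt.
- by apply: contraL gt_i => /maxb'; rewrite bb' leqNgt.
Qed.

Lemma has_type_prod n (s : seq {poly R}) : has_type n (\prod_(f <- s) f) ->
  (forall f, f \in s -> has_type (ptype f) f) /\ (\sum_(f <- s) ptype f)%N = n.
Proof.
elim: s n => [|g s IHs] n; first by rewrite !big_nil => /(has_type_uniq (has_typeXn 0)).
rewrite big_cons => /has_typeM [a [b [tg ts <-]]]; have [IHtype IHsum] := IHs _ ts.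
rewrite big_cons IHsum (has_type_ptype tg); split=> // f /predU1P [->|]; last exact: IHtype.
by rewrite (has_type_ptype tg).
Qed.

Lemma punit_has_type e f : has_type e f -> punit f -> e = 0%N.
Proof.
move=> te [g fg]; have := has_typeXn 0; rewrite expr0 -fg.
by case/has_typeM=> a [b [/(has_type_uniq te) -> _ /eqP]]; rewrite addn_eq0 => /andP [/eqP].
Qed.

Hypothesis msq0 :
  forall a b : R, a \isn't a GRing.unit -> b \isn't a GRing.unit -> a * b = 0.

Lemma mul_nonunit_poly (p q : {poly R}) :
  (forall i, p`_i \isn't a GRing.unit) -> (forall i, q`_i \isn't a GRing.unit) -> p * q = 0.
Proof. by move=> np nq; apply/polyP => k; rewrite coefM coef0 big1 // => i _; apply: msq0. Qed.

Lemma has_type0_punit f : has_type 0 f -> punit f.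
Proof.
move=> [u0 n0]; set u := f`_0; set t := f - u%:P.
have nt i : t`_i \isn't a GRing.unit.
  rewrite coefB coefC; case: eqP => [->|/eqP i0]; first by rewrite subrr nonunit0.
  by rewrite subr0; apply: n0.
have tt0 : t * t = 0 by apply: mul_nonunit_poly.
have uv : u%:P * u^-1%:P = 1 by rewrite -polyCM mulrV // polyC1.
(* [t] is square-zero, so [u + t] is inverted by [u^-1 (1 - u^-1 t)]. *)
exists (u^-1%:P * (1 - u^-1%:P * t)).
have -> : f = u%:P + t by rewrite addrC subrK.
transitivity (u%:P * u^-1%:P + (1 - u%:P * u^-1%:P) * (u^-1%:P * t)
              - u^-1%:P * u^-1%:P * (t * t)); first by ring.
by rewrite uv tt0 subrr mul0r mulr0 subr0 addr0.
Qed.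

Lemma has_type_pirreducible e f :
  has_type e f -> (0 < e)%N -> (e == 1%N) || (f`_0 != 0) -> pirreducible f.
Proof.
move=> te e_gt0 e1_or_f0; split=> [/(punit_has_type te) e0 | g h fgh].
  by rewrite e0 in e_gt0.
have [[|a] [[|b] [tg th ab]]] := has_typeM (eq_ind _ (has_type e) te _ fgh).
- by left; apply: has_type0_punit.
- by left; apply: has_type0_punit.
- by right; apply: has_type0_punit.
(* both factors have positive type, so [f`_0 = g`_0 h`_0] is a product of nonunits *)
move: e1_or_f0; rewrite -ab addSn addnS fgh coefM big_ord1 subnn /=.
by rewrite msq0 ?eqxx //; [apply: tg.2 | apply: th.2].
Qed.

Lemma pirreducible_coef0 e f :
  pirreducible f -> has_type e f -> (1 < e)%N -> f`_0 != 0.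
Proof.
move=> [_ irr_f] te e_gt1; apply/negP => /eqP f0.
have /factor_theorem [g fgX] : root f 0 by rewrite rootE horner_coef0 f0.
rewrite polyC0 subr0 in fgX.
have typeX : has_type 1 'X by rewrite -[X in has_type _ X]expr1; apply: has_typeXn.
have [ug | /(punit_has_type typeX) //] := irr_f _ _ fgX.
have [a [b [ta tb ab]]] := has_typeM (eq_ind _ (has_type e) te _ fgX).
have b1 : b = 1%N := has_type_uniq tb typeX.
by move: e_gt1; rewrite -ab b1 (punit_has_type ta ug).
Qed.

Definition type_tail (f : {poly R}) := (f`_(ptype f))^-1 *: f - 'X^(ptype f).

Lemma type_tail_nonunit f : has_type (ptype f) f ->
  forall i, (type_tail f)`_i \isn't a GRing.unit.
Proof.
move=> [ue ne] i; rewrite coefB coefZ coefXn.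
case: eqP => [->|/eqP ie]; first by rewrite mulVr // subrr nonunit0.
by rewrite subr0; apply/nonunitMl/ne.
Qed.

Lemma type_tail_decomp f : has_type (ptype f) f ->
  f = f`_(ptype f) *: ('X^(ptype f) + type_tail f).
Proof. by move=> [ue _]; rewrite addrC subrK scalerA mulrV // scale1r. Qed.

Lemma type_tail_coef0 f : (0 < ptype f)%N ->
  (type_tail f)`_0 = (f`_(ptype f))^-1 * f`_0.
Proof. by rewrite coefB coefZ coefXn eq_sym => /lt0n_neq0 /negPf ->; rewrite subr0. Qed.

Lemma prod_Xn_add (I : eqType) (s : seq I) (e : I -> nat) (p : I -> {poly R}) :
  (forall i, i \in s -> forall k, (p i)`_k \isn't a GRing.unit) ->
  \prod_(i <- s) ('X^(e i) + p i) =
    'X^(\sum_(i <- s) e i) + \sum_(i <- s) p i * 'X^(\sum_(j <- s) e j - e i).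
Proof.
elim: s => [|x s IHs] np; first by rewrite !big_nil expr0 addr0.
rewrite !big_cons IHs => [|i si]; last by apply: np; rewrite inE si orbT.
set N := (\sum_(j <- s) e j)%N; set S := \sum_(i <- s) _.
have nS k : S`_k \isn't a GRing.unit.
  rewrite coef_sum big_seq; apply: nonunit_sum => i si; rewrite coefMXn.
  by case: ifP => _; [apply: nonunit0 | apply: np; rewrite inE si orbT].
have px_S : p x * S = 0 by apply: mul_nonunit_poly => //; apply: np; rewrite inE eqxx.
have Xx_S : 'X^(e x) * S = \sum_(i <- s) p i * 'X^(e x + N - e i).
  rewrite mulr_sumr; apply: eq_big_seq => i si.
  rewrite -addnBA; last by rewrite /N (big_rem i si) leq_addr.
  by rewrite exprD mulrCA.
rewrite addKn -Xx_S exprD.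
transitivity ('X^(e x) * 'X^N + 'X^(e x) * S + p x * 'X^N + p x * S); first by ring.
by rewrite px_S addr0; ring.
Qed.

Lemma top_type_tails_sum n E (s : seq {poly R}) : \prod_(f <- s) f = 'X^n ->
  (0 < E <= n)%N -> (forall f, f \in s -> ptype f <= E)%N ->
  \sum_(f <- s | ptype f == E) (type_tail f)`_0 = 0.
Proof.
move=> prod_s /andP [E_gt0 le_En] le_E.
have [ts sum_ts] := has_type_prod (eq_ind_r (has_type n) (has_typeXn n) prod_s).
have expand := @prod_Xn_add _ s ptype type_tail (fun f sf => type_tail_nonunit (ts f sf)).
rewrite (eq_big_seq _ (fun f sf => type_tail_decomp (ts f sf))) scaler_prod in prod_s.
rewrite expand sum_ts in prod_s.
set C := \prod_(f <- s) _ in prod_s.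
have uC : C \is a GRing.unit.
  rewrite /C big_seq; apply: (big_ind (fun c : R => c \is a GRing.unit)).
  - exact: unitr1.
  - by move=> c d uc ud; rewrite unitrM uc ud.
  - by move=> f /ts [].
(* the only monomial of degree [n - E] on the left comes from the factors of type [E] *)
have /(congr1 (fun p : {poly R} => p`_(n - E))) := prod_s.
have nE_n : (n - E)%N != n by rewrite neq_ltn ltn_subrL E_gt0 (leq_trans E_gt0 le_En).
rewrite coefZ coefD coefXn coef_sum (negPf nE_n) add0r.
move/(canRL (mulKr uC)); rewrite mulr0 => sum0; apply: etrans sum0.
rewrite big_mkcond; apply: eq_big_seq => f sf /=.
rewrite coefMXn; case: (ltngtP (ptype f) E) => [lt_fE | gt_fE | ->].
- by rewrite ltn_sub2l // (leq_trans lt_fE).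
- by have := le_E f sf; rewrite leqNgt gt_fE.
- by rewrite ltnn subnn.
Qed.

Definition nonunit_zero_sum (k : nat) := exists bs : seq R,
  [/\ size bs = k, \sum_(b <- bs) b = 0 &
      all (fun b => (b != 0) && (b \isn't a GRing.unit)) bs].

Lemma is_length_Xn_types n k : is_length ('X^n : {poly R}) k ->
  exists es : seq nat, [/\ size es = k, all (fun e => 0 < e)%N es, sumn es = n &
    forall E, E \in es -> (1 < E)%N -> all (fun e => e <= E)%N es ->
      nonunit_zero_sum (count_mem E es)].
Proof.
move=> [_ [s [<- [irr prod_s]]]].
have [ts sum_ts] := has_type_prod (eq_ind_r (has_type n) (has_typeXn n) prod_s).
exists (map ptype s); split; first by rewrite size_map.
- apply/allP => _ /mapP [f sf ->]; rewrite lt0n; apply/eqP => tf0.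
  by case: (irr f sf) => + _; apply; apply: has_type0_punit; rewrite -tf0; apply: ts.
- by rewrite -sum_ts sumnE big_map.
move=> E /mapP [g sg gE] E_gt1 /allP maxE.
exists [seq (type_tail f)`_0 | f <- s & ptype f == E]; split.
- by rewrite size_map size_filter count_map.
- rewrite big_map big_filter; apply: top_type_tails_sum prod_s _ _.
    by rewrite (ltn_trans _ E_gt1) //= -sum_ts gE (big_rem g sg) leq_addr.
  by move=> f sf; apply/maxE/map_f.
apply/allP => b /mapP [f]; rewrite mem_filter => /andP [/eqP fE sf] ->.
have [uf nf] := ts f sf; rewrite type_tail_coef0 fE ?(ltn_trans _ E_gt1) //.
have f0 : f`_0 != 0 by apply: pirreducible_coef0 (irr f sf) (ts f sf) _; rewrite fE.
rewrite fE in uf; apply/andP; split.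
  by apply: contra_neq f0 => /(congr1 (GRing.mul f`_E)); rewrite mulVKr // mulr0.
by apply/nonunitMl/nf; rewrite fE eq_sym -lt0n (ltn_trans _ E_gt1).
Qed.

Lemma is_length_XnC k (s : seq R) : (0 < k)%N -> s != [::] ->
  all (fun a => a \isn't a GRing.unit) s -> (k == 1%N) || all (fun a => a != 0) s ->
  \sum_(a <- s) a = 0 -> is_length ('X^(k * size s) : {poly R}) (size s).
Proof.
move=> k_gt0 s_nil /allP ns k1_or_nz sum0; split; first by rewrite lt0n size_eq0.
exists [seq 'X^k + a%:P | a <- s]; split; first by rewrite size_map.
split=> [_ /mapP [a sa ->] |].
  apply: (has_type_pirreducible (has_typeXnC k_gt0 (ns a sa))) => //.
  rewrite coefD coefXn coefC [0%N == k]eq_sym (gtn_eqF k_gt0) add0r.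
  by case/orP: k1_or_nz => [-> // | /allP nz]; rewrite nz ?orbT.
rewrite big_map (@prod_Xn_add _ _ (fun=> k) polyC) => [|a sa i]; last first.
  by rewrite coefC; case: eqP => _; [apply: ns | apply: nonunit0].
rewrite -big_distrl /= -raddf_sum sum0 raddf0 mul0r addr0.
by rewrite big_const_seq count_predT iter_addn_0.
Qed.

Lemma nonunit_zero_sum1 : ~ nonunit_zero_sum 1.
Proof. by move=> [[|b [|? ?]] [] //= _]; rewrite big_seq1 => ->; rewrite eqxx. Qed.

Lemma nonunit_neq_unit (v u : R) :
  v \isn't a GRing.unit -> u \is a GRing.unit -> v != u.
Proof. by move=> nv; apply: contraTneq => <-. Qed.

Lemma card4_nonunit_eq (x y : R) : card_eq R 4 -> x != 0 -> y != 0 ->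
  x \isn't a GRing.unit -> y \isn't a GRing.unit -> x = y.
Proof.
move=> [s [_ [size_s all_s]]] x0 y0 nx ny; apply/eqP; apply: contraT => xy.
have u1x : 1 + x \is a GRing.unit by apply: unitDnonunit; rewrite ?unitr1.
have u1y : 1 + y \is a GRing.unit by apply: unitDnonunit; rewrite ?unitr1.
have uniq5 : uniq [:: 0; x; y; 1 + x; 1 + y].
  rewrite /= !inE !negb_or eq_sym x0 eq_sym y0 (inj_eq (addrI 1)) xy.
  by rewrite !nonunit_neq_unit ?nonunit0.
by have := uniq_leq_size uniq5 (fun r _ => all_s r); rewrite size_s.
Qed.

Lemma card4_nonunit_zero_sum3 : card_eq R 4 -> ~ nonunit_zero_sum 3.
Proof.
move=> R4 [[|x [|y [|z [|? ?]]]] [] //= _]; rewrite !big_cons big_nil addr0 !andbT.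
move=> sum0 /and3P [/andP [x0 nx] /andP [y0 ny] /andP [z0 nz]].
rewrite (card4_nonunit_eq R4 y0 x0 ny nx) (card4_nonunit_eq R4 z0 x0 nz nx) in sum0.
have nxx : x + x \isn't a GRing.unit by apply: nonunitD.
have [xx0 | xx_nz] := eqVneq (x + x) 0.
  by rewrite addrA xx0 add0r in sum0; rewrite sum0 eqxx in x0.
have := addrK x x; rewrite (card4_nonunit_eq R4 xx_nz x0 nxx nx) subrr => x_eq0.
by rewrite -x_eq0 eqxx in x0.
Qed.

Lemma annihilator_nonunit (r c : R) : c != 0 -> r * c = 0 -> r \isn't a GRing.unit.
Proof. by move=> c0 rc0; apply: contra c0 => ur; rewrite -(mulKr ur c) rc0 mulr0. Qed.

Lemma card_le4_of_nonunits (c : R) : c != 0 -> c \isn't a GRing.unit ->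
  (forall b, b \isn't a GRing.unit -> b = 0 \/ b = c) -> forall r, r \in [:: 0; c; 1; 1 + c].
Proof.
move=> c0 nc two r; rewrite !inE.
have [rc0 | rcc] := two _ (nonunitMl r nc).
  by case: (two r (annihilator_nonunit c0 rc0)) => ->; rewrite eqxx ?orbT.
have r1c0 : (r - 1) * c = 0 by rewrite mulrBl rcc mul1r subrr.
case: (two _ (annihilator_nonunit c0 r1c0)) => /eqP; rewrite subr_eq ?add0r => /eqP ->.
  by rewrite eqxx !orbT.
by rewrite addrC eqxx !orbT.
Qed.

Lemma card_gt4_nonunit_pair (a : R) : card_gt R 4 -> a != 0 -> a \isn't a GRing.unit ->
  exists b, [/\ b != 0, b \isn't a GRing.unit & a + b != 0].
Proof.
move=> [s [uniq_s size_s]] a0 na; apply: NNPP => no_b.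
have two b : b \isn't a GRing.unit -> b = 0 \/ b = - a.
  move=> nb; have [|b0] := eqVneq b 0; [by left | right].
  apply/eqP; rewrite -addr_eq0 addrC; apply: contraT => ab0.
  by exfalso; apply: no_b; exists b.
have := uniq_leq_size uniq_s (fun r _ => card_le4_of_nonunits _ (nonunitN na) two r).
by rewrite oppr_eq0 a0 => /(_ isT); rewrite leqNgt size_s.
Qed.

Lemma is_length_Xn n : (0 < n)%N -> is_length ('X^n : {poly R}) n.
Proof.
move=> n_gt0; have := @is_length_XnC 1 (nseq n 0); rewrite size_nseq mul1n; apply=> //.
- by rewrite -size_eq0 size_nseq -lt0n.
- by rewrite all_nseq nonunit0 orbT.
- by rewrite big1_seq // => b /andP [_ /nseqP []].
Qed.

Lemma is_length_Xn_pair k (a : R) : (0 < k)%N -> a != 0 -> a \isn't a GRing.unit ->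
  is_length ('X^(k * 2) : {poly R}) 2.
Proof.
move=> k_gt0 a0 na; apply: (@is_length_XnC _ [:: a; - a]) => //=.
- by rewrite na nonunitN.
- by rewrite oppr_eq0 a0 orbT.
- by rewrite !big_cons big_nil addr0 subrr.
Qed.

Lemma is_length_Xn_triple k (a b : R) : (0 < k)%N -> a != 0 -> b != 0 -> a + b != 0 ->
  a \isn't a GRing.unit -> b \isn't a GRing.unit -> is_length ('X^(k * 3) : {poly R}) 3.
Proof.
move=> k_gt0 a0 b0 ab0 na nb; apply: (@is_length_XnC _ [:: a; b; - (a + b)]) => //=.
- by rewrite na nb nonunitN ?nonunitD.
- by rewrite a0 b0 oppr_eq0 ab0 orbT.
- by rewrite !big_cons big_nil addr0 addrA subrr.
Qed.

End LocalRing.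

Theorem lemma4p10 (R : comUnitRingType) :
  artinian R -> local_ring R ->
  (exists a : R, a \isn't a GRing.unit /\ a != 0) ->
  (forall a b : R, a \isn't a GRing.unit -> b \isn't a GRing.unit -> a * b = 0) ->
  (card_gt R 4 -> forall k, is_length ('X^6 : {poly R}) k <-> k \in [:: 2; 3; 4; 6]%N) /\
  (card_eq R 4 -> forall k, is_length ('X^6 : {poly R}) k <-> k \in [:: 2; 4; 6]%N).
Proof.
move=> _ Rlocal [a [na a0]] msq0.
have len2 : is_length ('X^6 : {poly R}) 2 := is_length_Xn_pair Rlocal msq0 (k := 3) isT a0 na.
have len4 : is_length ('X^6 : {poly R}) 4.
  rewrite -[6%N]/(2 + 2 * 2)%N exprD.
  exact: is_length_mul (is_length_Xn Rlocal msq0 (n := 2) isT)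
                       (is_length_Xn_pair Rlocal msq0 (k := 2) isT a0 na).
have len6 : is_length ('X^6 : {poly R}) 6 := is_length_Xn Rlocal msq0 (n := 6) isT.
split=> [R_gt4 | R_eq4] k; split.
- case/(is_length_Xn_types Rlocal msq0) => es [<- pos sum6 top].
  apply: composition6_size pos sum6 (top_mult_avoidsP top _) => _ /[1!inE] /eqP ->.
  exact: nonunit_zero_sum1.
- have [b [b0 nb ab0]] := card_gt4_nonunit_pair Rlocal R_gt4 a0 na.
  rewrite !inE => /or4P [] /eqP -> //.
  exact: (is_length_Xn_triple Rlocal msq0 (k := 2) isT a0 b0 ab0 na nb).
- case/(is_length_Xn_types Rlocal msq0) => es [<- pos sum6 top].
  apply: composition6_size_no3 pos sum6 (top_mult_avoidsP top _) => _ /[!inE] /orP [] /eqP ->.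
    exact: nonunit_zero_sum1.
  exact: card4_nonunit_zero_sum3.
- by rewrite !inE => /or3P [] /eqP ->.
Qed.
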